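(* Consider the Wiener system $$x_{k+1}=Ax_k+Bu_k,\qquad y_k=\phi(Cx_k+Du_k),$$ with $A\in\mathbb{R}^{n\times n}$, $B\in\mathbb{R}^{n\times m}$, $C\in\mathbb{R}^{1\times n}$, $D\in\mathbb{R}^{1\times m}$, where $(A,B)$ is controllable and $(A,C)$ is observable, and $\phi:\mathbb{R}\to\mathbb{R}^p$ is a bijection whose inverse satisfies $\phi^{-1}(y)=\sum_{i=1}^q b_i\tilde\phi_i(y)$ for all $y\in\mathbb{R}^p$, for known functions $\tilde\phi_i:\mathbb{R}^p\to\mathbb{R}$ and real coefficients $b_i$. Suppose $\{u_k,y_k\}_{k=0}^{N-1}$ is a trajectory of this system and $u$ is persistently exciting of order $L+n$. Define $z_k=(\tilde\phi_1(y_k),\dots,\tilde\phi_q(y_k))^\top$ for $k=0,\dots,N-1$. Let $\{\bar u_k,\bar y_k\}_{k=0}^{L-1}$ be an input-output sequence and define $\bar z_k=(\tilde\phi_1(\bar y_k),\dots,\tilde\phi_q(\bar y_k))^\top$. If there exists $\alpha\in\mathbb{R}^{N-L+1}$ such that $$\begin{bmatrix}H_L(u)\\ H_L(z)\end{bmatrix}\alpha=\begin{bmatrix}\bar u_{[0,L-1]}\\ \bar z_{[0,L-1]}\end{bmatrix},$$ then $\{\bar u_k,\bar y_k\}_{k=0}^{L-1}$ is a trajectory of the Wiener system.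
   Context: For a sequence $\{x_k\}_{k=0}^{N-1}$ with $x_k\in\mathbb{R}^d$ and $1\le L\le N$, the Hankel matrix $H_L(x)\in\mathbb{R}^{dL\times(N-L+1)}$ has $(i,j)$ block $x_{i+j}$ ($i=0,\dots,L-1$, $j=0,\dots,N-L$); $x_{[a,b]}$ is the stacked vector $(x_a^\top,\dots,x_b^\top)^\top$. The sequence is persistently exciting of order $L$ if $\operatorname{rank}H_L(x)=dL$. An input-output sequence $\{u_k,y_k\}_{k=0}^{N-1}$ is a trajectory of the Wiener system if there exist an initial state $\bar x\in\mathbb{R}^n$ and states $\{x_k\}_{k=0}^{N}$ with $x_0=\bar x$ satisfying the system equations for $k=0,\dots,N-1$. *)

From HB Require Import structures.
From mathcomp Require Import all_boot all_order all_algebra.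
Set Implicit Arguments. Unset Strict Implicit. Unset Printing Implicit Defensive.
Import Order.TTheory GRing.Theory Num.Theory.
Local Open Scope ring_scope.

Lemma modord_proof (d L : nat) (r : 'I_(L * d)) : (r %% d < d)%N.
Proof.
case: d r => [|d] r; last by rewrite ltn_mod.
by case: r => r; rewrite muln0.
Qed.

Definition modord (d L : nat) (r : 'I_(L * d)) : 'I_d := Ordinal (modord_proof r).

(* Stacked vector x_[0,L-1] = (x_0^T, ..., x_(L-1)^T)^T; row r = i*d + c holds (x_i)_c. *)
Definition stackv (R : Type) (d L : nat) (x : nat -> 'cV[R]_d) : 'cV[R]_(L * d) :=
  \col_(r < L * d) x (r %/ d)%N (modord r) 0.

Definition hankel (R : Type) (d L N : nat) (x : nat -> 'cV[R]_d)
  : 'M[R]_(L * d, N - L + 1) :=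
  \matrix_(r < L * d, j < N - L + 1) x (r %/ d + j)%N (modord r) 0.

Definition pers_exc (R : fieldType) (d L N : nat) (x : nat -> 'cV[R]_d) : bool :=
  \rank (hankel L N x) == (L * d)%N.

Definition ctrb_mx (R : pzRingType) (n m : nat) (A : 'M[R]_n) (B : 'M[R]_(n, m))
  : 'M[R]_(n, n * m) :=
  \matrix_(r < n, c < n * m) ((A ^+ (c %/ m)%N) *m B) r (modord c).

Definition obsv_mx (R : pzRingType) (n : nat) (A : 'M[R]_n) (C : 'M[R]_(1, n))
  : 'M[R]_(n, n) :=
  \matrix_(r < n, c < n) (C *m A ^+ r) 0 c.

Definition controllable (R : fieldType) (n m : nat) (A : 'M[R]_n) (B : 'M[R]_(n, m)) : bool :=
  \rank (ctrb_mx A B) == n.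

Definition observable (R : fieldType) (n : nat) (A : 'M[R]_n) (C : 'M[R]_(1, n)) : bool :=
  \rank (obsv_mx A C) == n.

Definition wiener_traj (R : pzRingType) (n m p : nat) (A : 'M[R]_n) (B : 'M[R]_(n, m))
  (C : 'M[R]_(1, n)) (D : 'M[R]_(1, m)) (phi : R -> 'cV[R]_p)
  (N : nat) (u : nat -> 'cV[R]_m) (y : nat -> 'cV[R]_p) : Prop :=
  exists (xbar : 'cV[R]_n) (x : nat -> 'cV[R]_n),
    x 0%N = xbar /\
    forall k, (k < N)%N ->
      x k.+1 = A *m x k + B *m u k /\ y k = phi ((C *m x k + D *m u k) 0 0).

Definition zseq (R : Type) (p q : nat) (phit : 'I_q -> 'cV[R]_p -> R)
  (y : nat -> 'cV[R]_p) : nat -> 'cV[R]_q :=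
  fun k => \col_(i < q) phit i (y k).

From HB Require Import structures.
From mathcomp Require Import all_boot all_order all_algebra.
From mathcomp Require Import zify.
Set Implicit Arguments. Unset Strict Implicit. Unset Printing Implicit Defensive.
Import Order.TTheory GRing.Theory Num.Theory.
Local Open Scope ring_scope.

(* Write alpha = (a_0, ..., a_(N-L)).  Block k of H_L(x) alpha is
   the window combination  sum_j a_j x_(k+j), so the hypothesis says that
   ubar_k and zbar_k are window combinations of the data u and z.
   1. Window combinations of a state trajectory x driven by u again satisfy the
      state equation, driven by the combined input (linearity of (A, B)).
   2. The output map v = C x + D u is linear, hence the output value of the
      combined trajectory is the combination of the data output values v_k.
   3. Since phi^-1 = sum_i b_i phit_i, the value phi^-1(y) is the linear
      readout b . z of z; applying it to zbar_k = sum_j a_j z_(k+j) gives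
      phi^-1(ybar_k) = sum_j a_j v_(k+j), and applying phi recovers ybar_k.
   Controllability, observability and persistency of excitation are only
   needed for the converse implication; this direction holds without them. *)

Definition window_comb (R : pzRingType) (d N L : nat) (a : 'cV[R]_(N - L + 1))
  (x : nat -> 'cV[R]_d) : nat -> 'cV[R]_d :=
  fun k => \sum_(j < N - L + 1) a j 0 *: x (k + j)%N.

Lemma hankel_mul_stackv (R : comPzRingType) (d L N : nat)
    (x xb : nat -> 'cV[R]_d) (a : 'cV[R]_(N - L + 1)) :
  hankel L N x *m a = stackv L xb ->
  forall k, (k < L)%N -> xb k = window_comb a x k.
Proof.
move=> E k kL; apply/matrixP => c i; rewrite (ord1 i).
have rlt : (k * d + c < L * d)%N by have := ltn_ord c; nia.
have row_div : ((k * d + c) %/ d = k)%N.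
  by rewrite divnMDl ?divn_small ?addn0 //; have := ltn_ord c; lia.
have row_mod : modord (Ordinal rlt) = c.
  by apply: val_inj => /=; rewrite modnMDl modn_small.
have := congr1 (fun M : 'M[R]_(L * d, 1) => M (Ordinal rlt) 0) E.
rewrite !mxE /= row_div row_mod => <-; rewrite summxE; apply: eq_bigr => j _.
by rewrite !mxE row_div row_mod mulrC.
Qed.

Lemma window_index_lt (N L k : nat) (j : 'I_(N - L + 1)) :
  (L <= N)%N -> (k < L)%N -> (k + j < N)%N.
Proof. by have := ltn_ord j; lia. Qed.

Section LinearPart.
Variables (R : comPzRingType) (n m : nat).
Variables (A : 'M[R]_n) (B : 'M[R]_(n, m)) (C : 'M[R]_(1, n)) (D : 'M[R]_(1, m)).
Variables (N L : nat) (a : 'cV[R]_(N - L + 1)).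
Variables (x : nat -> 'cV[R]_n) (u : nat -> 'cV[R]_m).

Lemma window_comb_state_eq :
  (L <= N)%N ->
  (forall k, (k < N)%N -> x k.+1 = A *m x k + B *m u k) ->
  forall k, (k < L)%N ->
    window_comb a x k.+1 = A *m window_comb a x k + B *m window_comb a u k.
Proof.
move=> LN Hx k kL; rewrite /window_comb !mulmx_sumr -big_split.
apply: eq_bigr => j _.
by rewrite addSn Hx ?window_index_lt // scalerDr !scalemxAr.
Qed.

Lemma window_comb_output k :
  (C *m window_comb a x k + D *m window_comb a u k) 0 0
  = \sum_(j < N - L + 1) a j 0 * (C *m x (k + j)%N + D *m u (k + j)%N) 0 0.
Proof.
rewrite /window_comb !mulmx_sumr -big_split summxE; apply: eq_bigr => j _.
by rewrite /= -!scalemxAr -scalerDr mxE.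
Qed.

End LinearPart.

(* The linear readout z |-> sum_i b_i z_i, which turns z_k into phi^-1(y_k). *)
Definition readout (R : pzRingType) (q : nat) (b : 'I_q -> R) (z : 'cV[R]_q) : R :=
  \sum_(i < q) b i * z i 0.

Lemma readout_zseq (R : pzRingType) (p q : nat) (phiinv : 'cV[R]_p -> R)
    (phit : 'I_q -> 'cV[R]_p -> R) (b : 'I_q -> R)
    (Hinv : forall yy, phiinv yy = \sum_(i < q) b i * phit i yy)
    (y : nat -> 'cV[R]_p) (k : nat) :
  readout b (zseq phit y k) = phiinv (y k).
Proof. by rewrite Hinv; apply: eq_bigr => i _; rewrite mxE. Qed.

Lemma readout_window_comb (R : comPzRingType) (q N L : nat) (b : 'I_q -> R)
    (a : 'cV[R]_(N - L + 1)) (z : nat -> 'cV[R]_q) k :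
  readout b (window_comb a z k)
  = \sum_(j < N - L + 1) a j 0 * readout b (z (k + j)%N).
Proof.
rewrite /readout /window_comb.
under eq_bigr => i _ do rewrite summxE big_distrr.
rewrite exchange_big; apply: eq_bigr => j _; rewrite big_distrr.
by apply: eq_bigr => i _; rewrite /= !mxE mulrCA.
Qed.

Theorem proposition3 (R : realFieldType) (n m p q : nat)
  (A : 'M[R]_n) (B : 'M[R]_(n, m)) (C : 'M[R]_(1, n)) (D : 'M[R]_(1, m))
  (phi : R -> 'cV[R]_p) (phiinv : 'cV[R]_p -> R)
  (phit : 'I_q -> 'cV[R]_p -> R) (b : 'I_q -> R)
  (N L : nat) (u : nat -> 'cV[R]_m) (y : nat -> 'cV[R]_p)
  (ubar : nat -> 'cV[R]_m) (ybar : nat -> 'cV[R]_p) :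
  controllable A B ->
  observable A C ->
  cancel phi phiinv -> cancel phiinv phi ->
  (forall yy : 'cV[R]_p, phiinv yy = \sum_(i < q) b i * phit i yy) ->
  (1 <= L)%N -> (L + n <= N)%N ->
  wiener_traj A B C D phi N u y ->
  pers_exc (L + n) N u ->
  (exists alpha : 'cV[R]_(N - L + 1),
     col_mx (hankel L N u) (hankel L N (zseq phit y)) *m alpha
     = col_mx (stackv L ubar) (stackv L (zseq phit ybar))) ->
  wiener_traj A B C D phi L ubar ybar.
Proof.
move=> _ _ phiK phiinvK Hinv _ LnN [_ [x [_ Hx]]] _ [a].
have LN : (L <= N)%N by lia.
rewrite mul_col_mx => /eq_col_mx [/hankel_mul_stackv Eu /hankel_mul_stackv Ez].
exists (window_comb a x 0%N), (window_comb a x); split => // k kL; split.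
  rewrite Eu //; apply: window_comb_state_eq => // i iN; exact: (Hx i iN).1.
rewrite -[ybar k]phiinvK -(readout_zseq Hinv ybar k) Ez // readout_window_comb.
rewrite Eu // window_comb_output; congr phi; apply: eq_bigr => j _.
by rewrite (readout_zseq Hinv) (Hx _ (window_index_lt j LN kL)).2 phiK.
Qed.
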